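(* For every finite graph $G=(V,E)$ with $N$ vertices and every function $f:V\to\mathbb{R}$, the size of a minimum vertex cover of (the underlying undirected graph of) the violation graph $B_{0,f}$ equals $N\cdot\ell_0(f,\mathrm{Lip})$.
   Context: $\mathrm{dist}_G$ is the shortest-path distance; $g$ is Lipschitz if $|g(x)-g(y)|\le\mathrm{dist}_G(x,y)$ for all $x,y$, and $\mathrm{Lip}$ is the set of Lipschitz functions. $\ell_0(f,\mathrm{Lip})=\min_{g\in\mathrm{Lip}}\Pr_x[f(x)\ne g(x)]$ with $x$ uniform in $V$. $VS_f(x,y)=|f(x)-f(y)|-\mathrm{dist}_G(x,y)$ if positive, else $0$; $B_{0,f}$ has an edge $(x,y)$ iff $VS_f(x,y)>0$ and $f(x)<f(y)$. *)

From HB Require Import structures.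
From mathcomp Require Import all_boot all_order all_algebra.
From mathcomp Require Import reals.
Set Implicit Arguments. Unset Strict Implicit. Unset Printing Implicit Defensive.
Import Order.TTheory GRing.Theory Num.Theory.
Local Open Scope ring_scope.

Section Graph.
Variables (V : finType) (E : rel V).

Definition simple_graph := symmetric E /\ irreflexive E.

Fixpoint walk (k : nat) (x y : V) : bool :=
  if k is k'.+1 then [exists z, E x z && walk k' z y] else x == y.

(* shortest-path distance; None = +infinity (x, y in different components).
   A shortest walk always has fewer than #|V| edges. *)
Definition distG (x y : V) : option nat :=
  let i := find (fun k => walk k x y) (iota 0 #|V|) in
  if (i < #|V|)%N then Some i else None.

Variable R : realType.

Definition lipschitz (g : V -> R) : Prop :=
  forall x y d, distG x y = Some d -> `|g x - g y| <= d%:R.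

Definition VS (f : V -> R) (x y : V) : R :=
  match distG x y with
  | Some d => Num.max (`|f x - f y| - d%:R) 0
  | None => 0
  end.

Definition B0 (f : V -> R) (x y : V) : bool := (0 < VS f x y) && (f x < f y).

Definition vertex_cover (f : V -> R) (C : {set V}) : Prop :=
  forall x y, B0 f x y -> (x \in C) || (y \in C).

Definition min_vertex_cover (f : V -> R) (C : {set V}) : Prop :=
  vertex_cover f C /\ forall C' : {set V}, vertex_cover f C' -> (#|C| <= #|C'|)%N.

Definition disagree (f g : V -> R) : R :=
  #|[set x | f x != g x]|%:R / #|V|%:R.

Definition is_l0 (f : V -> R) (l : R) : Prop :=
  (exists2 g, lipschitz g & disagree f g = l) /\
  (forall g, lipschitz g -> l <= disagree f g).

End Graph.

From HB Require Import structures.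
From mathcomp Require Import all_boot all_order all_algebra.
From mathcomp Require Import reals.
From mathcomp Require Import lra.
Import Order.TTheory GRing.Theory Num.Theory.
Local Open Scope ring_scope.
Set Implicit Arguments. Unset Strict Implicit.

(* Both quantities are minima over the same family of vertex sets:
   - if g is Lipschitz, every violated pair {x,y} has f x <> g x or f y <> g y,
     so the disagreement set {f <> g} is a vertex cover of B_{0,f};
   - conversely, if C is a vertex cover, f is 1-Lipschitz on the complement
     S of C (a violated pair inside S would be an uncovered edge), and the
     McShane extension g v = min_{s in S} (f s + dist(s,v)) is a Lipschitz
     function agreeing with f on S, so {f <> g} is contained in C.
   Hence the minimum size of a vertex cover equals min_g #|{f <> g}|. *)

Section Walks.
Variables (V : finType) (E : rel V).

Lemma walkP k x y :
  reflect (exists p, [/\ size p = k, path E x p & last x p = y]) (walk E k x y).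
Proof.
elim: k x => [|k IH] x /=.
  by apply: (iffP eqP) => [<-|[[|z p] [//= _ _ ->]]]; exists [::].
apply: (iffP existsP) => [[z /andP [Exz /IH [p [sp pp lp]]]]|].
  by exists (z :: p); rewrite /= sp Exz pp lp.
case=> [[|z p] [//= [sp] /andP [Exz pp] lp]].
by exists z; rewrite Exz; apply/IH; exists p.
Qed.

Lemma walk_cat a b x y z :
  walk E a x y -> walk E b y z -> walk E (a + b) x z.
Proof.
move=> /walkP [p [<- pp <-]] /walkP [q [<- qq <-]]; apply/walkP.
by exists (p ++ q); rewrite size_cat cat_path last_cat pp qq.
Qed.

Lemma walk_sym : symmetric E -> forall k x y, walk E k x y -> walk E k y x.
Proof.
move=> Es k x y /walkP [p [<- pp <-]]; apply/walkP.
exists (rev (belast x p)); split; first by rewrite size_rev size_belast.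
  by rewrite rev_path (eq_path (e' := E)) // => u v; exact: Es.
by case: p {pp} => [|z p] //=; rewrite rev_cons last_rcons.
Qed.

(* Removing loops, any walk shortens to one with fewer than #|V| edges. *)
Lemma walk_short m x y :
  walk E m x y -> exists j, [/\ (j <= m)%N, (j < #|V|)%N & walk E j x y].
Proof.
move=> /walkP [p [<- pp <-]]; case: (shortenP pp) => q qq uq sub_qp.
exists (size q); split; last by apply/walkP; exists q; split.
  by apply: uniq_leq_size sub_qp; case/andP: uq.
by have := max_card (mem (x :: q)); rewrite (card_uniqP uq).
Qed.

Lemma distG_walk x y d : distG E x y = Some d -> walk E d x y.
Proof.
rewrite /distG; case: ifP => // Hi [<-].
have Hh : has (fun k => walk E k x y) (iota 0 #|V|) by rewrite has_find size_iota.
by have := nth_find 0%N Hh; rewrite nth_iota // add0n.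
Qed.

Lemma distG_min m x y :
  walk E m x y -> exists2 d, distG E x y = Some d & (d <= m)%N.
Proof.
case/walk_short => j [Hjm Hjn Hw].
have Hfind : (find (fun k => walk E k x y) (iota 0 #|V|) <= j)%N.
  rewrite leqNgt; apply/negP => Hlt.
  by have := before_find 0%N Hlt; rewrite nth_iota // add0n Hw.
exists (find (fun k => walk E k x y) (iota 0 #|V|)).
  by rewrite /distG (leq_ltn_trans Hfind Hjn).
exact: leq_trans Hfind Hjm.
Qed.

Lemma distG_refl x : distG E x x = Some 0%N.
Proof.
have [d -> ] := @distG_min 0 x x (eqxx x).
by rewrite leqn0 => /eqP ->.
Qed.

Lemma distG_sym : symmetric E -> forall x y, distG E x y = distG E y x.
Proof.
move=> Es x y; rewrite /distG.
have /eq_find -> // : (fun k => walk E k x y) =1 (fun k => walk E k y x).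
by move=> k; apply/idP/idP; exact: walk_sym.
Qed.

Lemma distG_tri x y z a b :
  distG E x y = Some a -> distG E y z = Some b ->
  exists2 c, distG E x z = Some c & (c <= a + b)%N.
Proof.
by move=> /distG_walk Hxy /distG_walk Hyz; exact: distG_min (walk_cat Hxy Hyz).
Qed.

End Walks.

Section McShane.
Variables (V : finType) (E : rel V) (R : realType).
Hypothesis Esym : symmetric E.
Variables (S : {set V}) (h : V -> R).
Hypothesis h_lipS : forall s t d, s \in S -> t \in S ->
  distG E s t = Some d -> `|h s - h t| <= d%:R.

Definition reaches (v s : V) : bool := (s \in S) && (distG E s v != None).

Definition offer (v s : V) : R := h s + (odflt 0%N (distG E s v))%:R.

Definition mcshane (v : V) : R :=
  if [pick s | reaches v s] is Some s0
  then offer v [arg min_(s < s0 | reaches v s) offer v s]%O else 0.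

Lemma mcshane_le v s : reaches v s -> mcshane v <= offer v s.
Proof.
move=> vs; rewrite /mcshane; case: pickP => [s0 vs0|no_s]; last by rewrite no_s in vs.
by case: arg_minP => // s1 _; apply.
Qed.

Lemma mcshane_attained v s :
  reaches v s -> exists2 s', reaches v s' & mcshane v = offer v s'.
Proof.
move=> vs; rewrite /mcshane; case: pickP => [s0 vs0|no_s]; last by rewrite no_s in vs.
by case: arg_minP => // s1 vs1 _; exists s1.
Qed.

Lemma mcshane_unreached v : (forall s, ~~ reaches v s) -> mcshane v = 0.
Proof. by move=> no_s; rewrite /mcshane; case: pickP => // s0; rewrite (negbTE (no_s s0)). Qed.

(* On S the extension agrees with h: the offer of v itself is h v, and no
   other offer is smaller because h is Lipschitz on S. *)
Lemma mcshane_agree v : v \in S -> mcshane v = h v.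
Proof.
move=> Sv; have vv : reaches v v by rewrite /reaches Sv distG_refl.
apply/eqP; rewrite eq_le; apply/andP; split.
  by have := mcshane_le vv; rewrite /offer distG_refl addr0.
have [s /andP [Ss] + ->] := mcshane_attained vv.
rewrite /offer; case dsv : (distG E s v) => [d|] // _ /=.
have := h_lipS Ss Sv dsv; rewrite ler_norml => /andP [? ?]; lra.
Qed.

Lemma mcshane_step u v e s : distG E u v = Some e -> reaches v s ->
  (exists s', reaches u s') /\ mcshane u <= mcshane v + e%:R.
Proof.
move=> duv /mcshane_attained [s' /andP [Ss' +] ->].
case ds'v : (distG E s' v) => [d|] // _.
have [c ds'u le_c] := distG_tri ds'v (etrans (distG_sym Esym v u) duv).
have us' : reaches u s' by rewrite /reaches Ss' ds'u.
split; first by exists s'.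
apply: le_trans (mcshane_le us') _.
by rewrite /offer ds'u ds'v /= -addrA lerD2l -natrD ler_nat.
Qed.

Lemma mcshane_lipschitz : lipschitz E mcshane.
Proof.
move=> u v e duv; have dvu : distG E v u = Some e by rewrite distG_sym.
case: (pickP (reaches v)) => [s vs|no_v].
  have [[s' us'] le_uv] := mcshane_step duv vs.
  have [_ le_vu] := mcshane_step dvu us'.
  rewrite ler_norml; apply/andP; split; lra.
have no_u s : ~~ reaches u s.
  by apply/negP => us; have [[s' vs'] _] := mcshane_step dvu us; rewrite no_v in vs'.
rewrite (mcshane_unreached no_u) mcshane_unreached => [|s]; last by rewrite no_v.
by rewrite subrr normr0.
Qed.

End McShane.

Section ViolationGraph.
Variables (V : finType) (E : rel V) (R : realType) (f : V -> R).

Lemma disagreement_cover g :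
  lipschitz E g -> vertex_cover E f [set x | f x != g x].
Proof.
move=> Lg x y; rewrite /B0 /VS; case dxy : (distG E x y) => [d|]; last by rewrite ltxx.
case/andP=> viol _; rewrite !inE -negb_and; apply/negP => /andP [/eqP fx /eqP fy].
move: viol; rewrite lt_max ltxx orbF subr_gt0 fx fy ltNge.
by rewrite (Lg _ _ _ dxy).
Qed.

(* Outside a vertex cover, no pair is violated: f is Lipschitz there. *)
Lemma cover_complement_lipschitz C : symmetric E -> vertex_cover E f C ->
  forall s t d, s \in ~: C -> t \in ~: C ->
  distG E s t = Some d -> `|f s - f t| <= d%:R.
Proof.
move=> Es coverC s t d; rewrite !inE => /negbTE Cs /negbTE Ct dst.
rewrite leNgt; apply/negP => viol.
have VSst : 0 < VS E f s t by rewrite /VS dst lt_max subr_gt0 viol.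
have VSts : 0 < VS E f t s by rewrite /VS (distG_sym Es) dst distrC lt_max subr_gt0 viol.
case: (ltgtP (f s) (f t)) => [lt_st|lt_ts|eq_st].
- by have := coverC s t; rewrite /B0 VSst lt_st Cs Ct => /(_ isT).
- by have := coverC t s; rewrite /B0 VSts lt_ts Cs Ct => /(_ isT).
- by move: viol; rewrite eq_st subrr normr0 ltNge ler0n.
Qed.

Lemma cover_repair C : symmetric E -> vertex_cover E f C ->
  exists2 g, lipschitz E g & [set x | f x != g x] \subset C.
Proof.
move=> Es coverC; have lipS := cover_complement_lipschitz Es coverC.
exists (mcshane E (~: C) f); first exact: mcshane_lipschitz.
apply/subsetP => x; rewrite inE; apply: contraR => Cx.
by rewrite mcshane_agree ?inE.
Qed.

(* Being a vertex cover is decidable, so a minimum vertex cover exists. *)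
Definition vertex_coverb (C : {set V}) : bool :=
  [forall x, forall y, B0 E f x y ==> (x \in C) || (y \in C)].

Lemma vertex_coverP C : reflect (vertex_cover E f C) (vertex_coverb C).
Proof.
apply: (iffP forallP) => [cov x y Bxy|cov x].
  exact: implyP (forallP (cov x) y) Bxy.
by apply/forallP => y; apply/implyP; exact: cov.
Qed.

Lemma exists_min_vertex_cover : exists C, min_vertex_cover E f C.
Proof.
have covT : vertex_cover E f setT by move=> x y _; rewrite in_setT.
have covbT : vertex_coverb setT := introT (vertex_coverP setT) covT.
case: (arg_minnP (fun C : {set V} => #|C|) covbT) => C covC minC.
by exists C; split => [|C' /vertex_coverP]; [exact/vertex_coverP | exact: minC].
Qed.

End ViolationGraph.

Unset Implicit Arguments.

Theorem claim3p3 (V : finType) (E : rel V) (R : realType) (f : V -> R) :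
  simple_graph E ->
  exists l : R, is_l0 E f l /\
    forall C : {set V}, min_vertex_cover E f C -> #|C|%:R = #|V|%:R * l.
Proof.
move=> [Es _]; have [C0 [covC0 minC0]] := exists_min_vertex_cover E f.
have [g Lg sub_g] := cover_repair Es covC0.
have card_g : #|[set x | f x != g x]| = #|C0|.
  apply/eqP; rewrite eqn_leq subset_leq_card //=; exact/minC0/disagreement_cover.
exists (#|C0|%:R / #|V|%:R); split; [split|].
- by exists g; rewrite // /disagree card_g.
- move=> g' Lg'; rewrite /disagree ler_wpM2r ?invr_ge0 ?ler0n // ler_nat.
  exact/minC0/disagreement_cover.
- move=> C [covC minC].
  have -> : #|C| = #|C0| by apply/eqP; rewrite eqn_leq minC ?minC0.
  have [V0|V_gt0] := posnP #|V|.
    by move: (max_card C0); rewrite V0 leqn0 => /eqP ->; rewrite mul0r.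
  by rewrite mulrC divfK // pnatr_eq0 -lt0n.
Qed.
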